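(* Let $n\ge 1$, let $\mathcal{P}=\{x\in\mathbb{R}^n : \tfrac12(\max_i x_i-\min_i x_i)\le 1\}$, and let $V=\{-1,0,1\}^n\setminus(\{-1,0\}^n\cup\{0,1\}^n)$ be the set of vectors with entries in $\{-1,0,1\}$ having at least one entry equal to $1$ and at least one entry equal to $-1$. Then each proper open face of $\mathcal{P}$ contains exactly one element of $V$. Moreover, for any $x\in\partial\mathcal{P}=\mathcal{P}\setminus\operatorname{int}(\mathcal{P})$, the element of $V$ lying in the same open face as $x$ is $v=\operatorname{round}\big(x+(1-\max_i x_i)\mathbf{1}\big)$, where $\mathbf{1}=(1,\dots,1)^\top$ and $\operatorname{round}(\cdot)$ replaces by $0$ every component that is not equal to $1$ or $-1$.
   Context: A polyhedron is a finite intersection of closed halfspaces. A face of a polyhedron $\mathcal{Q}\subseteq\mathbb{R}^n$ is a non-empty subset $F$ with either $F=\mathcal{Q}$ or $F=\mathcal{Q}\cap\{x: b^\top x=c\}$ for some $b\in\mathbb{R}^n$, $c\in\mathbb{R}$ with $b^\top x\le c$ for all $x\in\mathcal{Q}$. A proper face is a face different from $\mathcal{Q}$. An open face is the relative interior of a face (a face consisting of a single point is its own open face); a proper open face is the relative interior of a proper face. *)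

From HB Require Import structures.
From mathcomp Require Import all_boot all_order all_algebra.
From mathcomp Require Import reals.
Set Implicit Arguments. Unset Strict Implicit. Unset Printing Implicit Defensive.
Import Order.TTheory GRing.Theory Num.Theory.
Local Open Scope ring_scope.

Section Defs.
Variables (R : realType) (n : nat).
Notation vec := 'rV[R]_n.

Definition vset := vec -> Prop.

(* max_i x_i and min_i x_i (n >= 1 is assumed where used; the seed of the
   fold is the first coordinate, so it is one of the coordinates) *)
Definition coords (x : vec) : seq R := [seq x 0 i | i <- enum 'I_n].
Definition maxc (x : vec) : R := \big[Num.max/head 0 (coords x)]_(r <- coords x) r.
Definition minc (x : vec) : R := \big[Num.min/head 0 (coords x)]_(r <- coords x) r.

Definition dotv (b x : vec) : R := \sum_i b 0 i * x 0 i.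

(* distance used to define the (Euclidean) topology of R^n: the max-norm,
   which induces the same topology *)
Definition distv (x y : vec) : R := \big[Num.max/0]_i `|x 0 i - y 0 i|.

Definition is_face (Q F : vset) : Prop :=
  (exists x, F x) /\
  (F = Q \/ exists (b : vec) (c : R),
      (forall x, Q x -> dotv b x <= c) /\
      F = (fun x => Q x /\ dotv b x = c)).

Definition is_proper_face (Q F : vset) : Prop := is_face Q F /\ F <> Q.

Definition aff_hull (F : vset) : vset := fun y =>
  exists (k : nat) (p : 'I_k -> vec) (l : 'I_k -> R),
    (forall i, F (p i)) /\ \sum_i l i = 1 /\ y = \sum_i l i *: p i.

Definition relint (F : vset) : vset := fun x =>
  F x /\ exists e : R, 0 < e /\
    forall y, aff_hull F y -> distv y x < e -> F y.

Definition interior (Q : vset) : vset := fun x =>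
  exists e : R, 0 < e /\ forall y, distv y x < e -> Q y.

Definition boundary (Q : vset) : vset := fun x => Q x /\ ~ interior Q x.

Definition Ppoly : vset := fun x => (maxc x - minc x) / 2 <= 1.

Definition Vset : vset := fun v =>
  (forall i, v 0 i = -1 \/ v 0 i = 0 \/ v 0 i = 1) /\
  ~ ((forall i, v 0 i = -1 \/ v 0 i = 0) \/ (forall i, v 0 i = 0 \/ v 0 i = 1)).

Definition round (x : vec) : vec :=
  \row_i (if (x 0 i == 1) || (x 0 i == -1) then x 0 i else 0).

Definition ones : vec := const_mx 1.

End Defs.

From HB Require Import structures.
From mathcomp Require Import all_boot all_order all_algebra.
From mathcomp Require Import reals ring lra.
From Stdlib Require Import FunctionalExtensionality PropExtensionality Classical.
Import Order.TTheory GRing.Theory Num.Theory.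
Local Open Scope ring_scope.

(* P is cut out by the constraints x_p - x_q <= 2.  Call (p, q) a tight pair of
   x when x_p - x_q = 2; every face of P is [face_at z] = {y in P : the tight
   pairs of z stay tight at y} for z a point of the face with fewest tight pairs
   (a point breaking one of them would give a midpoint with fewer), and z then
   lies in its relative interior, so the open faces are exactly the classes of
   points with equal sets of tight pairs.  For x on the boundary, the shifted
   vector x + (1 - max x) 1 has maximum 1 and minimum -1, and rounding it keeps
   exactly the tight pairs of x, so it lands in V and in the open face of x.
   Finally an element v of V is recovered from its tight pairs: v_i = 1 iff
   (i, j) is tight for some j, and v_i = -1 iff (j, i) is. *)

Lemma ex_argmin_nat {T : Type} {P : T -> Prop} (f : T -> nat) :
  (exists x, P x) -> exists x, P x /\ forall y, P y -> (f x <= f y)%N.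
Proof.
move=> [x Px]; apply: NNPP => nomin.
have descent y : P y -> exists z, P z /\ (f z < f y)%N.
  move=> Py; apply: NNPP => nolt; apply: nomin; exists y; split=> // z Pz.
  by rewrite leqNgt; apply/negP => lt_zy; apply: nolt; exists z.
suff: forall k y, P y -> (k <= f y)%N by move/(_ (f x).+1 x Px); rewrite ltnn.
elim=> // k IH y /descent[z [Pz lt_zy]]; exact: leq_ltn_trans (IH z Pz) lt_zy.
Qed.

Lemma exists_small_scale {R : realFieldType} {e D : R} : 0 < e -> 0 <= D ->
  exists t, 0 < t /\ t * D < e.
Proof.
move=> e_gt0 D_ge0; exists (e / (2 * (D + 1))).
have D1_gt0 : 0 < 2 * (D + 1) by lra.
split; first exact: divr_gt0.
by rewrite mulrAC ltr_pdivrMr //; nra.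
Qed.

Section Polytope.
Set Implicit Arguments.
Unset Strict Implicit.
Variables (R : realType) (n : nat).
Hypothesis n_gt0 : (0 < n)%N.
Notation vec := 'rV[R]_n.
Implicit Types x y z w v : vec.

Lemma mem_coords x i : x 0 i \in coords x.
Proof. by apply/mapP; exists i; rewrite ?mem_enum. Qed.

Lemma head_coords x : head 0 (coords x) \in coords x.
Proof.
have := mem_coords x (Ordinal n_gt0); rewrite /coords.
by case: (enum 'I_n) => [|a s] //= _; exact: mem_head.
Qed.

Lemma coord_le_maxc x i : x 0 i <= maxc x.
Proof. exact: le_bigmax_seq (mem_coords x i) _. Qed.

Lemma minc_le_coord x i : minc x <= x 0 i.
Proof. exact: ge_bigmin_seq (mem_coords x i) _. Qed.

Lemma maxc_attained x : exists i, maxc x = x 0 i.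
Proof.
have: maxc x \in coords x.
  rewrite /maxc big_seq; elim/big_ind: _ => [|a b ha hb|//]; first exact: head_coords.
  by rewrite maxEle; case: ifP.
by case/mapP => i _ ->; exists i.
Qed.

Lemma minc_attained x : exists i, minc x = x 0 i.
Proof.
have: minc x \in coords x.
  rewrite /minc big_seq; elim/big_ind: _ => [|a b ha hb|//]; first exact: head_coords.
  by rewrite minEle; case: ifP.
by case/mapP => i _ ->; exists i.
Qed.

Lemma PpolyP x : Ppoly x <-> forall p q, x 0 p - x 0 q <= 2.
Proof.
rewrite /Ppoly; split=> [Px p q | H].
  by have := coord_le_maxc x p; have := minc_le_coord x q; lra.
have [i ->] := maxc_attained x; have [j ->] := minc_attained x.
by have := H i j; lra.
Qed.

Lemma distv_ge0 x y : 0 <= distv x y.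
Proof. exact: bigmax_ge_id. Qed.

Lemma coord_dist_le_distv x y i : `|x 0 i - y 0 i| <= distv x y.
Proof. exact: le_bigmax. Qed.

Definition tight x p q : Prop := x 0 p - x 0 q = 2.

Definition face_at x : vset R n :=
  fun y => Ppoly y /\ forall p q, tight x p q -> tight y p q.

Lemma face_at_ext x y :
  (forall p q, tight x p q <-> tight y p q) -> face_at x = face_at y.
Proof.
move=> same; apply: functional_extensionality => w.
apply: propositional_extensionality.
by split=> -[Pw tw]; split=> // p q /same; apply: tw.
Qed.

Lemma Ppoly_nbhs_tight z : Ppoly z -> exists e : R, 0 < e /\
  forall y, distv y z < e -> (forall p q, tight z p q -> tight y p q) -> Ppoly y.
Proof.
move=> /PpolyP Pz.
pose slack (pq : 'I_n * 'I_n) := 2 - (z 0 pq.1 - z 0 pq.2).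
pose e := \big[Num.min/1]_(pq | slack pq != 0) slack pq.
have e_gt0 : 0 < e.
  apply: lt_bigmin => // pq; rewrite lt0r => -> /=.
  by rewrite subr_ge0 Pz.
exists (e / 2); split; first by rewrite divr_gt0.
move=> y yz ty; apply/PpolyP => p q.
have [/eqP s0 | s_neq0] := boolP (slack (p, q) == 0).
  have tpq : tight z p q by rewrite /tight; move: s0; rewrite /slack /=; lra.
  by rewrite (ty p q tpq).
have e_le : e <= slack (p, q) by apply: bigmin_le_cond.
have := le_lt_trans (coord_dist_le_distv y z p) yz.
have := le_lt_trans (coord_dist_le_distv y z q) yz.
rewrite !ltr_norml /slack /= in e_le *; lra.
Qed.

Lemma aff_hull_face_at_tight z y p q :
  aff_hull (face_at z) y -> tight z p q -> tight y p q.
Proof.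
move=> [k [P [l [faceP [l1 ->]]]]] tz; rewrite /tight !summxE -sumrB.
under eq_bigr => i _ do rewrite !mxE -mulrBr ((faceP i).2 p q tz).
by rewrite -mulr_suml l1 mul1r.
Qed.

Lemma relint_face_at z : Ppoly z -> relint (face_at z) z.
Proof.
move=> Pz; split; first by split.
have [e [e_gt0 near]] := Ppoly_nbhs_tight Pz; exists e; split=> // y yaff yz.
have ty := aff_hull_face_at_tight yaff.
by split=> //; apply: near.
Qed.

Lemma dotv_delta_sub y p q :
  dotv (\row_k ((p == k)%:R - (q == k)%:R)) y = y 0 p - y 0 q.
Proof.
have delta r : \sum_k (r == k)%:R * y 0 k = y 0 r.
  rewrite (bigD1 r) //= eqxx mul1r big1 ?addr0 // => k.
  by rewrite eq_sym => /negbTE->; rewrite mul0r.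
rewrite /dotv; under eq_bigr => k _ do rewrite mxE mulrBl.
by rewrite sumrB !delta.
Qed.

Definition tight_pairs z : {set 'I_n * 'I_n} :=
  [set pq | z 0 pq.1 - z 0 pq.2 == 2].

Lemma tight_pairsP z p q : reflect (tight z p q) ((p, q) \in tight_pairs z).
Proof. by rewrite inE; apply: eqP. Qed.

Lemma dotv_sum (I : finType) (P : pred I) (b : I -> vec) y :
  dotv (\sum_(i | P i) b i) y = \sum_(i | P i) dotv (b i) y.
Proof.
rewrite /dotv; under eq_bigr => k _ do rewrite summxE mulr_suml.
by rewrite exchange_big.
Qed.

Lemma face_at_is_face z : Ppoly z -> is_face (@Ppoly R n) (face_at z).
Proof.
move=> Pz; split; first by exists z.
right; pose b : vec :=
  \sum_(pq in tight_pairs z) \row_k ((pq.1 == k)%:R - (pq.2 == k)%:R).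
have dotvb y : dotv b y = \sum_(pq in tight_pairs z) (y 0 pq.1 - y 0 pq.2).
  by rewrite dotv_sum; apply: eq_bigr => pq _; apply: dotv_delta_sub.
exists b, (\sum_(pq in tight_pairs z) 2); split.
  by move=> y /PpolyP Py; rewrite dotvb; apply: ler_sum => pq _; apply: Py.
apply: functional_extensionality => y; apply: propositional_extensionality.
rewrite dotvb; split=> [[Py ty] | [Py sum2]].
  by split=> //; apply: eq_bigr => -[p q] /tight_pairsP; apply: ty.
split=> // p q /tight_pairsP tpq.
have slack0 : \sum_(pq in tight_pairs z) (2 - (y 0 pq.1 - y 0 pq.2)) = 0.
  by rewrite sumrB sum2 subrr.
have slack_ge0 pq : pq \in tight_pairs z -> 0 <= 2 - (y 0 pq.1 - y 0 pq.2).
  by move=> _; rewrite subr_ge0; apply: (PpolyP y).1.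
by have /eqP := psumr_eq0P slack_ge0 slack0 tpq; rewrite subr_eq0 eq_sym => /eqP.
Qed.

Definition extrapolate (t : R) x y : vec := (1 + t) *: x - t *: y.

Lemma extrapolateE t x y i : extrapolate t x y 0 i = (1 + t) * x 0 i - t * y 0 i.
Proof. by rewrite !mxE. Qed.

Lemma dotv_extrapolate b t x y :
  dotv b (extrapolate t x y) = (1 + t) * dotv b x - t * dotv b y.
Proof.
rewrite /dotv !mulr_sumr -sumrB; apply: eq_bigr => i _.
by rewrite extrapolateE; ring.
Qed.

Lemma aff_hull_extrapolate (F : vset R n) t x y :
  F x -> F y -> aff_hull F (extrapolate t x y).
Proof.
move=> Fx Fy; exists 2%N, (fun i : 'I_2 => if i == ord0 then x else y),
  (fun i : 'I_2 => if i == ord0 then 1 + t else - t); split.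
  by move=> i; case: ifP.
rewrite !big_ord_recl !big_ord0 /=; split; first by ring.
by rewrite addr0 scaleNr.
Qed.

Lemma distv_extrapolate x y t : 0 <= t ->
  distv (extrapolate t x y) x <= t * distv x y.
Proof.
move=> t_ge0; apply: bigmax_le => [|i _].
  by rewrite mulr_ge0 ?distv_ge0.
rewrite extrapolateE.
have -> : (1 + t) * x 0 i - t * y 0 i - x 0 i = t * (x 0 i - y 0 i) by ring.
by rewrite normrM ger0_norm // ler_wpM2l ?coord_dist_le_distv.
Qed.

Lemma extrapolate_near x y e : 0 < e ->
  exists t, 0 < t /\ distv (extrapolate t x y) x < e.
Proof.
move=> e_gt0; have [t [t_gt0 small]] := exists_small_scale e_gt0 (distv_ge0 x y).
by exists t; split=> //; apply: le_lt_trans (distv_extrapolate x y (ltW t_gt0)) small.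
Qed.

Lemma face_subset (F : vset R n) y : is_face (@Ppoly R n) F -> F y -> Ppoly y.
Proof. by move=> [_ [->|[b [c [_ ->]]]]] // []. Qed.

Lemma face_at_sub_face (F : vset R n) x y :
  is_face (@Ppoly R n) F -> F x -> face_at x y -> F y.
Proof.
move=> [_ [->|[b [c [bc ->]]]]]; first by move=> _ [].
move=> [Px bx] [Py ty].
(* Just past x on the way from y, the tight pairs of x survive, so we stay in P
   and b.x = c forces b.y = c. *)
split=> //; have [e [e_gt0 near]] := Ppoly_nbhs_tight Px.
have [t [t_gt0 close]] := extrapolate_near x y e_gt0.
have Pw : Ppoly (extrapolate t x y).
  apply: near => // p q tx; have := ty p q tx.
  by rewrite /tight !extrapolateE in tx *; nra.
have := bc _ Pw; have := bc _ Py; rewrite dotv_extrapolate bx; nra.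
Qed.

Lemma relint_face_eq (F : vset R n) x :
  is_face (@Ppoly R n) F -> relint F x -> F = face_at x.
Proof.
move=> Fface [Fx [e [e_gt0 near]]].
apply: functional_extensionality => y; apply: propositional_extensionality.
split=> [Fy|]; last exact: face_at_sub_face.
split=> [|p q]; first exact: face_subset Fface Fy.
(* Just past x on the way from y we are still in F, so a pair tight at x
   cannot slacken at y. *)
have [t [t_gt0 close]] := extrapolate_near x y e_gt0.
have /PpolyP Pw := face_subset Fface (near _ (aff_hull_extrapolate t Fx Fy) close).
have /PpolyP Py := face_subset Fface Fy.
move: (Pw p q) (Py p q); rewrite /tight !extrapolateE; nra.
Qed.

Notation midpoint := (extrapolate (- (1 / 2))).

Lemma Ppoly_midpoint x y : Ppoly x -> Ppoly y -> Ppoly (midpoint x y).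
Proof.
move=> /PpolyP Px /PpolyP Py; apply/PpolyP => p q; rewrite !extrapolateE.
by move: (Px p q) (Py p q); lra.
Qed.

Lemma tight_midpoint x y p q : Ppoly x -> Ppoly y ->
  tight (midpoint x y) p q -> tight x p q /\ tight y p q.
Proof.
move=> /PpolyP Px /PpolyP Py; rewrite /tight !extrapolateE.
by move: (Px p q) (Py p q); lra.
Qed.

Lemma face_midpoint (F : vset R n) x y :
  is_face (@Ppoly R n) F -> F x -> F y -> F (midpoint x y).
Proof.
move=> [_ [->|[b [c [_ ->]]]]]; first exact: Ppoly_midpoint.
move=> [Px bx] [Py b_y]; split; first exact: Ppoly_midpoint.
by rewrite dotv_extrapolate bx b_y; ring.
Qed.

Lemma face_eq_face_at (F : vset R n) :
  is_face (@Ppoly R n) F -> exists z, F z /\ F = face_at z.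
Proof.
move=> Fface.
have [z [Fz zmin]] := ex_argmin_nat (fun z => #|tight_pairs z|) Fface.1.
exists z; split=> //.
apply: functional_extensionality => w; apply: propositional_extensionality.
split=> [Fw|]; last exact: face_at_sub_face.
have [Pz Pw] := (face_subset Fface Fz, face_subset Fface Fw).
split=> // p q tz; apply: NNPP => ntw.
have : tight_pairs (midpoint z w) \proper tight_pairs z.
  apply/properP; split.
    apply/subsetP => -[p' q'] /tight_pairsP /(tight_midpoint Pz Pw) [tz' _].
    exact/tight_pairsP.
  exists (p, q); first exact/tight_pairsP.
  by apply/tight_pairsP => /(tight_midpoint Pz Pw) [].
by move/proper_card; rewrite ltnNge zmin //; apply: face_midpoint.
Qed.

Lemma face_at_properP z : face_at z <> @Ppoly R n <-> exists p q, tight z p q.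
Proof.
split=> [not_all | [p [q tz]] all].
  apply: NNPP => none; apply: not_all.
  apply: functional_extensionality => w; apply: propositional_extensionality.
  by split=> [[] // | Pw]; split=> // p q tz; exfalso; apply: none; exists p, q.
have P0 : Ppoly (0 : vec) by apply/PpolyP => p' q'; rewrite !mxE; lra.
rewrite -all in P0; have := P0.2 p q tz.
by rewrite /tight !mxE; lra.
Qed.

Lemma boundary_tight x : boundary (@Ppoly R n) x -> exists p q, tight x p q.
Proof.
move=> [Px not_int]; apply: NNPP => none; apply: not_int.
have [e [e_gt0 near]] := Ppoly_nbhs_tight Px; exists e; split=> // y yx.
by apply: near => // p q tx; exfalso; apply: none; exists p, q.
Qed.

Lemma tight_ternary v : (forall i, v 0 i = -1 \/ v 0 i = 0 \/ v 0 i = 1) ->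
  forall p q, tight v p q <-> v 0 p = 1 /\ v 0 q = -1.
Proof.
move=> ternary p q; rewrite /tight.
by case: (ternary p) => [->|[->|->]]; case: (ternary q) => [->|[->|->]]; split;
  try (move=> [? ?]; lra); try lra.
Qed.

Lemma Ppoly_Vset v : Vset v -> Ppoly v.
Proof.
move=> [ternary _]; apply/PpolyP => p q.
by case: (ternary p) => [->|[->|->]]; case: (ternary q) => [->|[->|->]]; lra.
Qed.

Lemma Vset_has_pm1 v : Vset v -> (exists i, v 0 i = 1) /\ (exists j, v 0 j = -1).
Proof.
move=> [ternary notV]; split; apply: NNPP => none; apply: notV.
  by left=> i; case: (ternary i) => [|[|vi]]; auto; exfalso; apply: none; exists i.
by right=> i; case: (ternary i) => [vi|[|]]; auto; exfalso; apply: none; exists i.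
Qed.

Lemma Vset_coord_one v i : Vset v -> v 0 i = 1 <-> exists j, tight v i j.
Proof.
move=> Vv; have [_ [j vj]] := Vset_has_pm1 Vv.
split=> [vi | [k /(tight_ternary Vv.1) []//]].
by exists j; apply/(tight_ternary Vv.1).
Qed.

Lemma Vset_coord_neg v i : Vset v -> v 0 i = -1 <-> exists j, tight v j i.
Proof.
move=> Vv; have [[j vj] _] := Vset_has_pm1 Vv.
split=> [vi | [k /(tight_ternary Vv.1) []//]].
by exists j; apply/(tight_ternary Vv.1).
Qed.

Lemma Vset_tight_inj v w : Vset v -> Vset w ->
  (forall p q, tight v p q <-> tight w p q) -> v = w.
Proof.
move=> Vv Vw same; apply/rowP => i.
have one : v 0 i = 1 <-> w 0 i = 1.
  by rewrite (Vset_coord_one i Vv) (Vset_coord_one i Vw); split=> -[j /same]; exists j.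
have neg : v 0 i = -1 <-> w 0 i = -1.
  by rewrite (Vset_coord_neg i Vv) (Vset_coord_neg i Vw); split=> -[j /same]; exists j.
case: (Vv.1 i) => [vi|[vi|vi]]; [by rewrite vi (neg.1 vi) | | by rewrite vi (one.1 vi)].
case: (Vw.1 i) => [wi|[wi|wi]].
- by move: (neg.2 wi); rewrite vi; lra.
- by rewrite vi wi.
- by move: (one.2 wi); rewrite vi; lra.
Qed.

Definition rounded_shift x : vec := round (x + (1 - maxc x) *: ones R n).

Section RoundedShift.
Variables (z : vec) (p0 q0 : 'I_n).
Hypotheses (Pz : Ppoly z) (tz : tight z p0 q0).

Lemma tight_fst_maxc : z 0 p0 = maxc z.
Proof.
have [k zk] := maxc_attained z; have := (PpolyP z).1 Pz k q0.
by have := coord_le_maxc z p0; move: tz; rewrite /tight zk; lra.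
Qed.

Lemma maxc_sub2_le_coord i : maxc z - 2 <= z 0 i.
Proof. by have := (PpolyP z).1 Pz p0 i; rewrite tight_fst_maxc; lra. Qed.

Lemma rounded_shift_coord i :
  [\/ rounded_shift z 0 i = 1 /\ z 0 i = maxc z,
       rounded_shift z 0 i = -1 /\ z 0 i = maxc z - 2 |
       rounded_shift z 0 i = 0 /\ maxc z - 2 < z 0 i < maxc z].
Proof.
rewrite /rounded_shift /round !mxE mulr1.
have lo := maxc_sub2_le_coord i; have hi := coord_le_maxc z i.
case: ifP => [/orP[/eqP e | /eqP e] | /norP[/eqP n1 /eqP n2]].
- by apply: Or31; split; lra.
- by apply: Or32; split; lra.
apply: Or33; split=> //; rewrite !lt_neqAle lo hi !andbT.
by apply/andP; split; apply/eqP => e; [apply: n2 | apply: n1]; lra.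
Qed.

Lemma Vset_rounded_shift : Vset (rounded_shift z).
Proof.
split=> [i | [allv | allv]].
- by case: (rounded_shift_coord i) => -[-> _]; auto.
- have := tight_fst_maxc.
  by case: (allv p0); case: (rounded_shift_coord p0) => -[-> ?]; lra.
- have : z 0 q0 = maxc z - 2 by move: tz; rewrite /tight tight_fst_maxc; lra.
  by case: (allv q0); case: (rounded_shift_coord q0) => -[-> ?]; lra.
Qed.

Lemma tight_rounded_shift p q : tight (rounded_shift z) p q <-> tight z p q.
Proof.
have lo := maxc_sub2_le_coord; have hi := coord_le_maxc z.
have := lo p; have := lo q; have := hi p; have := hi q; rewrite /tight.
by case: (rounded_shift_coord p) => -[-> ?]; case: (rounded_shift_coord q) => -[-> ?];
  split; lra.
Qed.

End RoundedShift.

Lemma face_at_tight_iff x y : Ppoly x -> Ppoly y -> face_at x = face_at y ->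
  forall p q, tight x p q <-> tight y p q.
Proof.
move=> Px Py xy p q.
have [_ tyx] : face_at y x by rewrite -xy.
have [_ txy] : face_at x y by rewrite xy.
by split; [apply: txy | apply: tyx].
Qed.

End Polytope.

Theorem lemma3 (R : realType) (n : nat) (hn : (1 <= n)%N) :
  (* each proper open face of P contains exactly one element of V *)
  (forall F : vset R n, is_proper_face (@Ppoly R n) F ->
     exists! v : 'rV[R]_n, Vset v /\ relint F v) /\
  (* for x on the boundary, the element of V in the open face of x *)
  (forall x : 'rV[R]_n, boundary (@Ppoly R n) x ->
     (exists F : vset R n, is_proper_face (@Ppoly R n) F /\ relint F x) /\
     (forall F : vset R n, is_proper_face (@Ppoly R n) F -> relint F x ->
        let v := round (x + (1 - maxc x) *: ones R n) in
        Vset v /\ relint F v)).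
Proof.
split=> [F [Fface Fproper] | x xbd].
  have [z [Fz FE]] := face_eq_face_at hn Fface.
  have Pz := face_subset Fface Fz.
  have [p [q tz]] : exists p q, tight z p q.
    by apply/(face_at_properP hn); rewrite -FE.
  have Vv := Vset_rounded_shift hn Pz tz.
  have Fv : F = face_at (rounded_shift z).
    by rewrite FE; apply: face_at_ext => p' q'; rewrite (tight_rounded_shift hn Pz tz).
  exists (rounded_shift z); split.
    by split=> //; rewrite Fv; apply/relint_face_at/Ppoly_Vset.
  move=> w [Vw Fw]; apply: Vset_tight_inj => //.
  apply: face_at_tight_iff; [exact: Ppoly_Vset | exact: Ppoly_Vset |].
  by rewrite -Fv; apply: relint_face_eq.
have [p [q tx]] := boundary_tight hn xbd.
have Px := xbd.1; have Vv := Vset_rounded_shift hn Px tx.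
have Fv : face_at x = face_at (rounded_shift x).
  by apply: face_at_ext => p' q'; rewrite (tight_rounded_shift hn Px tx).
split.
  exists (face_at x); split; last exact: relint_face_at.
  by split; [apply: face_at_is_face | apply/(face_at_properP hn); exists p, q].
move=> F [Fface _] Fx v; split=> //.
by rewrite (relint_face_eq hn Fface Fx) Fv; apply/relint_face_at/Ppoly_Vset.
Qed.
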